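(* With the icosahedral setting of the context, let $\omega>0$, $n\ge2$ and $y\in\mathcal{I}$. Then \[ w_n(x;y)=\sum_{j=0}^{\lfloor n/2\rfloor}\left(-\frac{\tau+2}{4\omega}\right)^j\frac{1}{(15\kappa+\tfrac32+n-2j)_j}\,\frac{\nu(n)}{\nu(n-2j)}\,L_j^{(15\kappa+1/2+n-2j)}\left(\omega|x|^2\right)\phi_{n-2j}(x;y). \]
   Context: Let $\tau=(1+\sqrt5)/2$. Vectors in $\mathbb{R}^3$ are row vectors; $\langle x,y\rangle=\sum x_iy_i$, $|x|^2=\langle x,x\rangle$. Let $\kappa\ge0$ be real. Let $\mathcal{I}=\{(0,\pm\tau,\pm1),(\pm1,0,\pm\tau),(\pm\tau,\pm1,0)\}$. For $y_0\in\mathcal{I}$, $q_n(x;y_0)$ are defined by $\left(1-r\langle x,y_0\rangle\right)^{-1}\prod_{y\in\mathcal{I}}\left(1-r\langle x,y\rangle\right)^{-\kappa}=\sum_{n\ge0}q_n(x;y_0)r^n$. $\nu(n)=2^n(6\kappa+1)_s(5\kappa+\tfrac12)_t$ with $s=\lfloor n/2\rfloor$, $t=\lfloor (n+1)/2\rfloor$, $(a)_k=a(a+1)\cdots(a+k-1)$. For $n\ge0$ define $w_n(x;y_0)=\sum_{j=0}^{\lfloor n/2\rfloor}(-1)^j\frac{(\tau+2)^j}{(4\omega)^jj!}\frac{\nu(n)}{\nu(n-2j)}q_{n-2j}(x;y_0)$ and $\phi_n(x;y_0)=\sum_{j=0}^{\lfloor n/2\rfloor}\frac{(\tau+2)^j|x|^{2j}}{4^jj!\,(-15\kappa-n+1/2)_j}\frac{\nu(n)}{\nu(n-2j)}q_{n-2j}(x;y_0)$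 (so $\phi_0=1$). The Laguerre polynomial is $L_m^{(\alpha)}(s)=\frac{(\alpha+1)_m}{m!}\sum_{j=0}^m\frac{(-m)_j}{(\alpha+1)_j}\frac{s^j}{j!}$. *)

From mathcomp Require Import all_boot all_order all_algebra.
From mathcomp Require Import reals.
Set Implicit Arguments. Unset Strict Implicit. Unset Printing Implicit Defensive.
Import Order.TTheory GRing.Theory Num.Theory.
Local Open Scope ring_scope.

Section Icosa.
Variable R : realType.
Variable kappa : R.

Definition tau : R := (1 + Num.sqrt 5) / 2.

Definition vec3 (a b c : R) : 'rV[R]_3 :=
  \row_(i < 3) (if val i == 0%N then a else if val i == 1%N then b else c).

Definition inner (x y : 'rV[R]_3) : R := \sum_(i < 3) x 0 i * y 0 i.
Definition sqnorm (x : 'rV[R]_3) : R := inner x x.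

(* the 12 vertices of the icosahedron *)
Definition icos : seq 'rV[R]_3 :=
  [seq vec3 0 (s1 * tau) s2 | s1 <- [:: 1; -1], s2 <- [:: 1; -1]] ++
  [seq vec3 s1 0 (s2 * tau) | s1 <- [:: 1; -1], s2 <- [:: 1; -1]] ++
  [seq vec3 (s1 * tau) s2 0 | s1 <- [:: 1; -1], s2 <- [:: 1; -1]].

Definition poch (a : R) (k : nat) : R := \prod_(i < k) (a + i%:R).

(* formal power series in r, represented by coefficient sequences *)
Definition conv (a b : nat -> R) (n : nat) : R :=
  \sum_(i < n.+1) a i * b (n - i)%N.

(* coefficients of (1 - c r)^{-1} *)
Definition geom_coef (c : R) (k : nat) : R := c ^+ k.
(* coefficients of (1 - c r)^{-kappa} (binomial series):
   (kappa)_k c^k / k! *)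
Definition binser_coef (c : R) (k : nat) : R := poch kappa k * c ^+ k / (k`!)%:R.

(* q_n(x;y0): coefficient of r^n in
   (1 - r<x,y0>)^{-1} prod_{y in I} (1 - r<x,y>)^{-kappa} *)
Definition q (n : nat) (x y0 : 'rV[R]_3) : R :=
  foldr (fun y s => conv (binser_coef (inner x y)) s)
        (geom_coef (inner x y0)) icos n.

Definition nu (n : nat) : R :=
  2 ^+ n * poch (6 * kappa + 1) n./2 * poch (5 * kappa + 1 / 2) (n.+1)./2.

Definition w (omega : R) (n : nat) (x y0 : 'rV[R]_3) : R :=
  \sum_(j < n./2.+1)
    (-1) ^+ j * (tau + 2) ^+ j / ((4 * omega) ^+ j * (j`!)%:R)
    * (nu n / nu (n - 2 * j)) * q (n - 2 * j) x y0.

Definition phi (n : nat) (x y0 : 'rV[R]_3) : R :=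
  \sum_(j < n./2.+1)
    (tau + 2) ^+ j * sqnorm x ^+ j
    / (4 ^+ j * (j`!)%:R * poch (- 15 * kappa - n%:R + 1 / 2) j)
    * (nu n / nu (n - 2 * j)) * q (n - 2 * j) x y0.

End Icosa.

Definition laguerre (R : realType) (m : nat) (alpha s : R) : R :=
  poch (alpha + 1) m / (m`!)%:R *
  \sum_(j < m.+1) poch (- m%:R) j / poch (alpha + 1) j * (s ^+ j / (j`!)%:R).

(* The identity is formal in the q_m: substituting the definition of phi_{n-2j}
   turns the right-hand side into a double sum over (j, i) of multiples of
   (nu(n)/nu(n-2(i+j))) q_{n-2(i+j)}; regrouped along the antidiagonals
   k = i + j, it has the shape of w_n.
   Comparing coefficients and rescaling, the k-th one reduces, with
   g = 15 kappa + 1/2 + n - 2k and t = omega |x|^2, to the Laguerre inversion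
     sum_(i <= k) (-t)^i / (i! (1-g-2i)_i) * L_(k-i)^(g+2i)(t) / (g+2i+1)_(k-i)
       = 1 / k!.
   Expanding the Laguerre polynomials, the coefficient of (-t)^p for p > 0 is
   a multiple of
     sum_(i <= p) 1 / (i! (p-i)! (1-g-2i)_i (g+2i+1)_(p-i)),
   which telescopes to 0 against (-1)^(i+1) i binom(p,i) / (p! (g+i)_p). *)

From mathcomp Require Import all_boot all_order all_algebra.
From mathcomp Require Import reals.
From mathcomp Require Import ring lra zify.
Import Order.TTheory GRing.Theory Num.Theory.
Local Open Scope ring_scope.

Lemma big_ord_triangle (V : nmodType) (F : nat -> nat -> V) (N : nat) :
  \sum_(j < N.+1) \sum_(i < (N - j).+1) F j i =
  \sum_(k < N.+1) \sum_(j < k.+1) F j (k - j)%N.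
Proof.
elim: N => [|N IH]; first by rewrite !big_ord1.
rewrite big_ord_recr [RHS]big_ord_recr /= -IH subnn big_ord1.
rewrite [X in _ = _ + X]big_ord_recr /= subnn.
have -> : \sum_(j < N.+1) \sum_(i < (N.+1 - j).+1) F j i =
          \sum_(j < N.+1) (\sum_(i < (N - j).+1) F j i + F j (N.+1 - j)%N).
  by apply: eq_bigr => j _; rewrite subSn ?big_ord_recr // -ltnS.
by rewrite big_split addrA.
Qed.

Lemma half_subn_mul2n (n j : nat) :
  (j <= n./2)%N -> ((n - 2 * j)./2 = n./2 - j)%N.
Proof.
move=> le_j_half; have -> : (n - 2 * j = odd n + (n./2 - j).*2)%N.
  by have := odd_double_half n; rewrite -!muln2; lia.
by rewrite half_bit_double.
Qed.

Lemma sum_triangular_comp (F : fieldType) (a Q r : nat -> F) (d : nat -> nat -> F)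
    (n : nat) : (forall m, r m != 0) ->
  \sum_(j < n./2.+1) a j * (r n / r (n - 2 * j)%N) *
     \sum_(i < (n - 2 * j)./2.+1)
        d (n - 2 * j)%N i * (r (n - 2 * j)%N / r (n - 2 * j - 2 * i)%N)
        * Q (n - 2 * j - 2 * i)%N
  = \sum_(k < n./2.+1)
      (\sum_(j < k.+1) a j * d (n - 2 * j)%N (k - j)%N)
      * (r n / r (n - 2 * k)%N) * Q (n - 2 * k)%N.
Proof.
move=> r_neq0.
pose G j i := a j * d (n - 2 * j)%N i * (r n / r (n - 2 * (j + i))%N)
  * Q (n - 2 * (j + i))%N.
transitivity (\sum_(j < n./2.+1) \sum_(i < (n./2 - j).+1) G j i).
  apply: eq_bigr => -[j /= lt_j_half] _.
  rewrite half_subn_mul2n -1?ltnS // mulr_sumr; apply: eq_bigr => i _.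
  have -> : (n - 2 * j - 2 * i = n - 2 * (j + i))%N by lia.
  by rewrite /G; field; rewrite !r_neq0.
rewrite (@big_ord_triangle _ G); apply: eq_bigr => -[k lt_k] _ /=.
rewrite mulr_suml mulr_suml; apply: eq_bigr => -[j /= lt_jk] _.
by rewrite /G subnKC // -ltnS.
Qed.

Lemma natr_fact_neq0 (R : numDomainType) m : (m`!)%:R != 0 :> R.
Proof. by rewrite pnatr_eq0 -lt0n fact_gt0. Qed.

Section Pochhammer.
Variable R : realType.
Implicit Types (a g : R) (k l m : nat).

Lemma poch0 a : poch a 0 = 1.
Proof. by rewrite /poch big_ord0. Qed.

Lemma pochS a k : poch a k.+1 = a * poch (a + 1) k.
Proof.
rewrite /poch big_ord_recl addr0; congr (_ * _).
by apply: eq_bigr => i _; rewrite /bump /= -natr1 addrAC addrA.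
Qed.

Lemma pochSr a k : poch a k.+1 = poch a k * (a + k%:R).
Proof. by rewrite /poch big_ord_recr. Qed.

Lemma pochD a m k : poch a (m + k) = poch a m * poch (a + m%:R) k.
Proof.
elim: k => [|k IH]; first by rewrite addn0 poch0 mulr1.
by rewrite addnS !pochSr IH natrD addrA mulrA.
Qed.

Lemma poch_gt0 a k : 0 < a -> 0 < poch a k.
Proof. by move=> a_gt0; apply: prodr_gt0 => i _; rewrite ltr_wpDr. Qed.

Lemma poch_neq0 a k : 0 < a -> poch a k != 0.
Proof. by move=> a_gt0; rewrite gt_eqF // poch_gt0. Qed.

Lemma poch_reflect g i :
  poch (1 - g - 2 * i%:R) i = (-1) ^+ i * poch (g + i%:R) i.
Proof.
elim: i g => [|i IH] g; first by rewrite !poch0 mulr1.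
rewrite pochS -(natr1 i).
have -> : 1 - g - 2 * (i%:R + 1) + 1 = 1 - (g + 1) - 2 * i%:R by ring.
by rewrite IH pochSr exprS [g + (_ + 1)]addrA [g + _ + 1]addrAC; ring.
Qed.

Lemma poch_reflect_neq0 g i : 0 < g -> poch (1 - g - 2 * i%:R) i != 0.
Proof.
move=> g_gt0; rewrite poch_reflect mulf_neq0 ?signr_eq0 //.
by apply: poch_neq0; rewrite ltr_wpDr.
Qed.

Lemma poch_oppn m l : (l <= m)%N ->
  poch (- m%:R) l * ((m - l)`!)%:R = (-1) ^+ l * (m`!)%:R :> R.
Proof.
elim: l => [|l IH] lt_lm; first by rewrite poch0 subn0 mul1r.
have := IH (ltnW lt_lm).
rewrite -{1}(subnSK lt_lm) factS natrM (subnSK lt_lm) natrB 1?ltnW // => IHl.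
by rewrite pochSr exprS -[RHS]mulrA -IHl; ring.
Qed.

End Pochhammer.

Section LaguerreInversion.
Variables (R : realType) (g : R).

Lemma laguerre_div_poch m (a t : R) : 0 < a + 1 ->
  laguerre m a t / poch (a + 1) m =
  \sum_(l < m.+1) (- t) ^+ l / ((m - l)`!%:R * l`!%:R * poch (a + 1) l).
Proof.
move=> a1_gt0; have poch_a1_neq0 k := @poch_neq0 R _ k a1_gt0.
rewrite /laguerre mulrAC [_ * _ / poch _ _]mulrAC mulfV // mul1r mulr_sumr.
apply: eq_bigr => -[l /=]; rewrite ltnS => le_lm _.
have -> : poch (- m%:R) l = (-1) ^+ l * m`!%:R / (m - l)`!%:R :> R.
  by rewrite -poch_oppn // mulfK ?natr_fact_neq0.
rewrite [(- t) ^+ _]exprNn; field.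
by rewrite !natr_fact_neq0 poch_a1_neq0.
Qed.

Let potential p i : R :=
  (-1) ^+ i.+1 * i%:R * 'C(p, i)%:R / (p`!%:R * poch (g + i%:R) p).

Lemma potential_sub p i : 0 < g -> (i <= p)%N ->
  potential p i.+1 - potential p i =
  p%:R / (i`!%:R * (p - i)`!%:R * poch (1 - g - 2 * i%:R) i
          * poch (g + 2 * i%:R + 1) (p - i)).
Proof.
move=> g_gt0 le_ip; have i_ge0 := ler0n R i; have p_ge0 := ler0n R p.
have poch_split : poch (g + i%:R) p.+1 =
    poch (g + i%:R) i * (g + 2 * i%:R) * poch (g + 2 * i%:R + 1) (p - i).
  have -> : p.+1 = (i + (p - i).+1)%N by rewrite addnS subnKC.
  by rewrite pochD pochS mulrA -addrA -mulr2n mulr_natl.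
have pochSr' : poch (g + i%:R) p = poch (g + i%:R) p.+1 / (g + i%:R + p%:R).
  by rewrite pochSr mulfK //; apply/eqP; lra.
have pochS' : poch (g + i.+1%:R) p = poch (g + i%:R) p.+1 / (g + i%:R).
  rewrite pochS [_ * poch _ _]mulrC mulfK -?natr1 ?addrA //.
  by apply/eqP; lra.
have binS : 'C(p, i.+1)%:R = (p%:R - i%:R) * 'C(p, i)%:R / (i%:R + 1) :> R.
  apply: (canRL (mulfK _)); first by apply/eqP; lra.
  by rewrite natr1 -natrB // -!natrM mulnC mul_bin_left.
have bin : 'C(p, i)%:R = p`!%:R / (i`!%:R * (p - i)`!%:R) :> R.
  by rewrite -(bin_fact le_ip) !natrM mulfK // mulf_neq0 ?natr_fact_neq0.
(* [field] does not know ((-1) ^+ i) ^+ 2 = 1: move the sign to a numerator. *)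
rewrite /potential pochSr' pochS' poch_split binS bin poch_reflect.
rewrite -[in RHS]invr_sign !exprS -(natr1 i).
by field; rewrite signr_eq0 !natr_fact_neq0 !poch_neq0 ?gt_eqF //; lra.
Qed.

Lemma laguerre_inversion_kernel_eq0 p : 0 < g -> (0 < p)%N ->
  \sum_(i < p.+1) (i`!%:R * (p - i)`!%:R * poch (1 - g - 2 * i%:R) i
                   * poch (g + 2 * i%:R + 1) (p - i))^-1 = 0.
Proof.
move=> g_gt0 p_gt0; have p_neq0 : p%:R != 0 :> R by rewrite pnatr_eq0 -lt0n.
apply: (mulfI p_neq0); rewrite mulr0 mulr_sumr.
transitivity (\sum_(i < p.+1) (potential p i.+1 - potential p i)).
  by apply: eq_bigr => -[i /=]; rewrite ltnS => le_ip _; rewrite potential_sub.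
rewrite -(big_mkord xpredT (fun i => potential p i.+1 - potential p i)).
by rewrite telescope_sumr // /potential bin_small // !(mulr0, mul0r) subrr.
Qed.

Lemma laguerre_inversion (t : R) k : 0 < g ->
  \sum_(i < k.+1) (- t) ^+ i / (i`!%:R * poch (1 - g - 2 * i%:R) i)
     * (laguerre (k - i) (g + 2 * i%:R) t / poch (g + 2 * i%:R + 1) (k - i))
  = k`!%:R^-1.
Proof.
move=> g_gt0; have shift_gt0 i : 0 < g + 2 * i%:R + 1 by have := ler0n R i; lra.
pose F i l := (- t) ^+ i / (i`!%:R * poch (1 - g - 2 * i%:R) i)
  * ((- t) ^+ l / ((k - i - l)`!%:R * l`!%:R * poch (g + 2 * i%:R + 1) l)).
have F_antidiag p i : (i <= p <= k)%N ->
    F i (p - i)%N = (- t) ^+ p / (k - p)`!%:R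
      * (i`!%:R * (p - i)`!%:R * poch (1 - g - 2 * i%:R) i
         * poch (g + 2 * i%:R + 1) (p - i))^-1.
  case/andP=> le_ip le_pk.
  rewrite /F (_ : k - i - (p - i) = k - p)%N; last by lia.
  have -> : (- t) ^+ p = (- t) ^+ i * (- t) ^+ (p - i) by rewrite -exprD subnKC.
  field.
  by rewrite !natr_fact_neq0 poch_reflect_neq0 ?poch_neq0.
transitivity (\sum_(i < k.+1) \sum_(l < (k - i).+1) F i l).
  by apply: eq_bigr => i _; rewrite laguerre_div_poch ?mulr_sumr.
rewrite (@big_ord_triangle _ F) big_ord_recl big_ord1.
rewrite [X in _ + X]big1 ?addr0 => [|[p lt_pk] _].
  by rewrite /F /= !subn0 !expr0 !poch0 !fact0 !mulr1 !div1r invr1 mul1r.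
rewrite /=; under eq_bigr => i _ do
  rewrite F_antidiag ?lt_pk ?andbT -1?ltnS ?ltn_ord //.
by rewrite -mulr_sumr laguerre_inversion_kernel_eq0 ?mulr0.
Qed.

End LaguerreInversion.

Lemma laguerre_phi_coef_sum (R : realType) (kappa omega c s : R) (n k : nat) :
  0 <= kappa -> omega != 0 -> (2 * k <= n)%N ->
  \sum_(j < k.+1)
     ((- (c / (4 * omega))) ^+ j / poch (15 * kappa + 3 / 2 + (n - 2 * j)%:R) j
      * laguerre j (15 * kappa + 1 / 2 + (n - 2 * j)%:R) (omega * s)
      * (c ^+ (k - j) * s ^+ (k - j)
         / (4 ^+ (k - j) * (k - j)`!%:R
            * poch (- 15 * kappa - (n - 2 * j)%:R + 1 / 2) (k - j))))
  = (-1) ^+ k * c ^+ k / ((4 * omega) ^+ k * k`!%:R).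
Proof.
move=> kappa_ge0 omega_neq0 le_2k_n.
set u := c / (4 * omega); set t := omega * s.
set g := 15 * kappa + 1 / 2 + (n - 2 * k)%:R.
have g_gt0 : 0 < g by have := ler0n R (n - 2 * k); rewrite /g; lra.
have -> : (-1) ^+ k * c ^+ k / ((4 * omega) ^+ k * k`!%:R)
          = (- u) ^+ k * k`!%:R^-1.
  rewrite /u [(- (_ / _)) ^+ _]exprNn expr_div_n; field.
  by rewrite natr_fact_neq0 expf_neq0 // mulf_neq0 // pnatr_eq0.
rewrite -(@laguerre_inversion R g t k g_gt0) mulr_sumr (reindex_inj rev_ord_inj).
apply: eq_bigr => -[i /=]; rewrite ltnS => le_ik _.
rewrite subSS subKn // (_ : n - 2 * (k - i) = n - 2 * k + 2 * i)%N; last by lia.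
have -> : 15 * kappa + 3 / 2 + (n - 2 * k + 2 * i)%:R = g + 2 * i%:R + 1.
  by rewrite natrD natrM /g; field.
have -> : 15 * kappa + 1 / 2 + (n - 2 * k + 2 * i)%:R = g + 2 * i%:R.
  by rewrite natrD natrM /g; field.
have -> : - 15 * kappa - (n - 2 * k + 2 * i)%:R + 1 / 2 = 1 - g - 2 * i%:R.
  by rewrite natrD natrM /g; field.
have -> : c ^+ i * s ^+ i = (- u) ^+ i * (- t) ^+ i * 4 ^+ i.
  by rewrite -!exprMn mulrNN /u /t; congr (_ ^+ _); field.
have -> : (- u) ^+ k = (- u) ^+ (k - i) * (- u) ^+ i by rewrite -exprD subnK.
field.
rewrite poch_neq0 ?poch_reflect_neq0 ?natr_fact_neq0 ?expf_neq0 ?pnatr_eq0 //.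
by have := ler0n R i; lra.
Qed.

Lemma nu_neq0 (R : realType) (kappa : R) m : 0 <= kappa -> nu kappa m != 0.
Proof.
by move=> kappa_ge0; rewrite !mulf_neq0 ?expf_neq0 ?pnatr_eq0 ?poch_neq0 //; lra.
Qed.

Theorem mainTheorem7 (R : realType) (kappa omega : R) (n : nat)
    (x y : 'rV[R]_3) :
  0 <= kappa -> 0 < omega -> (2 <= n)%N -> y \in icos R ->
  w kappa omega n x y =
  \sum_(j < n./2.+1)
     (- ((tau R + 2) / (4 * omega))) ^+ j
     / poch (15 * kappa + 3 / 2 + (n - 2 * j)%:R) j
     * (nu kappa n / nu kappa (n - 2 * j))
     * laguerre j (15 * kappa + 1 / 2 + (n - 2 * j)%:R) (omega * sqnorm x)
     * phi kappa (n - 2 * j) x y.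
Proof.
move=> kappa_ge0 omega_gt0 _ _.
pose a j := (- ((tau R + 2) / (4 * omega))) ^+ j
  / poch (15 * kappa + 3 / 2 + (n - 2 * j)%:R) j
  * laguerre j (15 * kappa + 1 / 2 + (n - 2 * j)%:R) (omega * sqnorm x).
pose d m i := (tau R + 2) ^+ i * sqnorm x ^+ i
  / (4 ^+ i * i`!%:R * poch (- 15 * kappa - m%:R + 1 / 2) i).
under [RHS]eq_bigr do rewrite [_ * laguerre _ _ _]mulrAC.
rewrite /phi (@sum_triangular_comp _ a (fun m => q kappa m x y) (nu kappa) d).
  apply: eq_bigr => -[k /= lt_k_half] _; congr (_ * _ * _).
  rewrite /a /d laguerre_phi_coef_sum ?gt_eqF //.
  by have := odd_double_half n; rewrite -muln2; lia.
by move=> m; apply: nu_neq0.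
Qed.
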